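(* Consider running GD-$k$ with rate $r=\frac{1}{\gamma k^2}$ on an instance $\sigma$ of $k$-MPMD with $m$ requests on an $H$-metric space $(\chi,d_H)$ with parameter $\gamma$, and let $\mathcal M=\{M_1,\ldots,M_p\}$ be the output perfect $k$-way matching, $M_\ell=\{v_{\ell,1},\ldots,v_{\ell,k}\}$. Let $T$ be the time at which all requests are matched. Then the total distance cost satisfies $$\sum_{\ell=1}^p d_H(\mathrm{pos}(v_{\ell,1}),\ldots,\mathrm{pos}(v_{\ell,k}))\le 4\gamma mk\sum_{S\subseteq V}\mathrm{sur}(S)(k-\mathrm{sur}(S))\,y_S(T)\le 4\gamma mk\,\mathcal D'(\sigma),$$ where $\mathcal D'(\sigma)$ is the optimal value of $(\mathcal D')$.
   Context: $k\ge2$. An $H$-metric with parameter $\gamma$ (integer, $1\le\gamma\le k-1$) is a map $d_H:\chi^k\to[0,\infty)$ that is invariant under permutation of its arguments, is zero iff all arguments are equal, satisfies $d_H(p_1,\ldots,p_k)\le d_H(p_1,\ldots,p_i,a,\ldots,a)+d_H(a,\ldots,a,p_{i+1},\ldots,p_k)$ for all $p_j,a\in\chi$ and $i\in\{1,\dots,k\}$ (with $k-i$, resp. $i$, copies of $a$), and satisfies: $d_H(p)\le d_H(p')$ whenever the set of distinct entries of $p$ is a proper subset of that of $p'$, and $d_H(p)\le\gamma d_H(p')$ whenever these sets are equal. An instance is $\sigma=(V,\mathrm{atime},\mathrm{pos})$ with $V=\{u_1,\ldots,u_m\}$ ($m$ a multiple of $k$), nondecreasing arrival times $\mathrm{atime}:V\to\mathbb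 R_{\ge0}$ and positions $\mathrm{pos}:V\to\chi$. The metric $d$ on $\chi$ is $d(p,q):=d_H(p,q,\ldots,q)+d_H(q,p,\ldots,p)$ (first argument once, second $k-1$ times); $E$ is the set of unordered pairs of distinct requests, $\mathrm{opt\text{-}cost}(\{u,w\}):=d(\mathrm{pos}(u),\mathrm{pos}(w))+|\mathrm{atime}(u)-\mathrm{atime}(w)|$; for $S\subseteq V$, $\mathrm{sur}(S):=|S|\bmod k$ and $\delta(S)$ is the set of pairs with exactly one element in $S$. The LP $(\mathcal D')$ is: maximize $\sum_{S\subseteq V}\mathrm{sur}(S)(k-\mathrm{sur}(S))y_S$ subject to $\sum_{S:e\in\delta(S)}y_S\le\frac{1}{\gamma k^2}\mathrm{opt\text{-}cost}(e)$ for all $e\in E$ and $y_S\ge0$ for all $S\subseteq V$. Algorithm GD-$k$ (Greedy Dual for $k$-MPMD) runs in continuous time from $0$. It maintains: a partition of the already-arrived requests into ''active sets'' ($A(v)$ denotes the active set containing $v$); a family $\mathcal M$ of disjoint $k$-element sets of requests (the groups matched so far); a request is free if it lies in no set of $\mathcal M$, and $\mathrm{free}(S)$ is the set of free requests of $S$; and dual values $y_S(\tau)\ge0$ for $S\subseteq V$, all initially $0$. When a request $v$ arrives, $A(v):=\{v\}$ is created. At every moment, for each active set $S$ with $\mathrm{free}(S)\ne\emptyset$, $y_S$ increases continuously at rate $r$; all other $y_S$ stay constant. Whenever a pair $e=\{u,w\}$ of arrived requests with $A(u)\ne A(w)$ becomes tight, i.e. $\sum_{S:e\in\delta(S)}y_S=\frac{1}{\gamma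 k^2}\mathrm{opt\text{-}cost}(e)$, the algorithm replaces $A(u)$ and $A(w)$ by the single active set $S=A(u)\cup A(w)$, marks $e$, and, while $|\mathrm{free}(S)|\ge k$, chooses arbitrarily $k$ free requests of $S$ and adds them as a group to $\mathcal M$ (they are matched at the current time). *)

From HB Require Import structures.
From mathcomp Require Import all_boot all_order all_algebra perm.
From mathcomp Require Import reals.
Set Implicit Arguments. Unset Strict Implicit. Unset Printing Implicit Defensive.
Import Order.TTheory GRing.Theory Num.Theory.
Local Open Scope ring_scope.

Section HMetric.
Variables (R : realType) (X : Type) (k : nat).

Definition entry (p : 'I_k -> X) (x : X) : Prop := exists j, p j = x.

Definition entries_psubset (p p' : 'I_k -> X) : Prop :=
  (forall x, entry p x -> entry p' x) /\ (exists x, entry p' x /\ ~ entry p x).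

Definition entries_eq (p p' : 'I_k -> X) : Prop :=
  forall x, entry p x <-> entry p' x.

Definition is_Hmetric (dH : ('I_k -> X) -> R) (gamma : nat) : Prop :=
  (forall p, 0 <= dH p) /\
  (forall (s : {perm 'I_k}) p, dH (fun j => p (s j)) = dH p) /\
  (forall p, dH p = 0 <-> (forall i j, p i = p j)) /\
  (forall p (a : X) (i : nat), (1 <= i <= k)%N ->
      dH p <= dH (fun j : 'I_k => if (j < i)%N then p j else a)
              + dH (fun j : 'I_k => if (j < i)%N then a else p j)) /\
  (forall p p', entries_psubset p p' -> dH p <= dH p') /\
  (forall p p', entries_eq p p' -> dH p <= gamma%:R * dH p').

End HMetric.

Section GD.
Variables (R : realType) (X : Type) (k gamma : nat) (dH : ('I_k -> X) -> R).
Variables (m : nat) (atime : 'I_m -> R) (pos : 'I_m -> X).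

(* d(p,q) = d_H(p,q,...,q) + d_H(q,p,...,p) *)
Definition dist (p q : X) : R :=
  dH (fun j : 'I_k => if nat_of_ord j == 0%N then p else q)
  + dH (fun j : 'I_k => if nat_of_ord j == 0%N then q else p).

Definition opt_cost (u w : 'I_m) : R :=
  dist (pos u) (pos w) + `|atime u - atime w|.

Definition rate : R := (gamma%:R * (k%:R) ^+ 2)^-1.

Definition sur (S : {set 'I_m}) : nat := (#|S| %% k)%N.

Definition in_delta (S : {set 'I_m}) (u w : 'I_m) : bool := (u \in S) != (w \in S).

Definition ysum (y : {set 'I_m} -> R) (u w : 'I_m) : R :=
  \sum_(S : {set 'I_m} | in_delta S u w) y S.

Definition dual_obj (y : {set 'I_m} -> R) : R :=
  \sum_(S : {set 'I_m}) (sur S)%:R * (k - sur S)%:R * y S.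

Definition dual_feasible (y : {set 'I_m} -> R) : Prop :=
  (forall S, 0 <= y S) /\
  (forall u w : 'I_m, u != w -> ysum y u w <= rate * opt_cost u w).

Definition dual_opt : R :=
  sup (fun z : R => exists2 y, dual_feasible y & dual_obj y = z).

(* A state of GD-k: current time, arrived requests, partition of the
   arrived requests into active sets, family of matched groups, duals. *)
Record state := State {
  st_time : R;
  st_arr : {set 'I_m};
  st_act : {set {set 'I_m}};
  st_match : {set {set 'I_m}};
  st_y : {set 'I_m} -> R }.

Definition init_state : state := State 0 set0 set0 set0 (fun _ => 0).

Definition free (s : state) (S : {set 'I_m}) : {set 'I_m} :=
  S :\: cover (st_match s).

Definition blk (s : state) (v : 'I_m) : {set 'I_m} := pblock (st_act s) v.

Definition grow (s : state) (dt : R) : {set 'I_m} -> R :=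
  fun S => st_y s S +
    (if (S \in st_act s) && (free s S != set0) then rate * dt else 0).

Inductive step : state -> state -> Prop :=
| StepArrive (s : state) (v : 'I_m) :
    v \notin st_arr s -> atime v = st_time s ->
    step s (State (st_time s) (v |: st_arr s) ([set v] |: st_act s)
                  (st_match s) (st_y s))
| StepWait (s : state) (dt : R) :
    0 < dt ->
    (* no arrival is skipped *)
    (forall v, v \notin st_arr s -> st_time s + dt <= atime v) ->
    (* all pending tight pairs have been processed *)
    (forall u w, u \in st_arr s -> w \in st_arr s -> blk s u != blk s w ->
       ysum (st_y s) u w < rate * opt_cost u w) ->
    (forall u w, u \in st_arr s -> w \in st_arr s -> blk s u != blk s w ->
       ysum (grow s dt) u w <= rate * opt_cost u w) ->
    step s (State (st_time s + dt) (st_arr s) (st_act s) (st_match s)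
                  (grow s dt))
| StepMerge (s : state) (u w : 'I_m) (G : {set {set 'I_m}}) :
    u \in st_arr s -> w \in st_arr s -> blk s u != blk s w ->
    ysum (st_y s) u w = rate * opt_cost u w ->
    (* G: the groups formed by repeatedly picking k free requests of the
       merged set until fewer than k free requests remain *)
    (forall g, g \in G -> g \subset free s (blk s u :|: blk s w) /\ #|g| = k) ->
    trivIset G ->
    (#|free s (blk s u :|: blk s w) :\: cover G| < k)%N ->
    step s (State (st_time s) (st_arr s)
                  ((blk s u :|: blk s w) |: ((st_act s :\ blk s u) :\ blk s w))
                  (st_match s :|: G) (st_y s)).

Inductive reaches : state -> state -> Prop :=
| reaches_refl s : reaches s s
| reaches_step s1 s2 s3 : step s1 s2 -> reaches s2 s3 -> reaches s1 s3.

Definition group_cost (G : {set 'I_m}) : R :=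
  match enum G with
  | [::] => 0
  | v0 :: _ => dH (fun j : 'I_k => pos (nth v0 (enum G) j))
  end.

End GD.

From Pilot Require Import Defs.
From mathcomp Require Import all_boot all_order all_algebra perm.
From mathcomp Require Import reals.
From mathcomp Require Import ring lra zify.
From Stdlib Require Import FunctionalExtensionality.
Set Implicit Arguments. Unset Strict Implicit. Unset Printing Implicit Defensive.
Import Order.TTheory GRing.Theory Num.Theory.
Local Open Scope ring_scope.

(* The proof rests on an invariant of GD-k: for every active set S and all u, w in S,
     d(pos u, pos w) <= gamma k^2 * sum_(S' \subset S) (2 - [u in S'] - [w in S']) y_S'.
   It holds trivially for a new singleton, survives the growth of the duals, and survives a
   merge along a tight pair {u, w}: the triangle inequality through u and w adds
   d(pos u, pos w) <= gamma k^2 * sum_(S' in delta(u, w)) y_S', and the coefficients add up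
   because every raised set is laminar with respect to the active partition.  A matched
   group lies in one active set, so by d_H(p) <= sum_i d(p_i, a) its cost is at most
   2 gamma k^3 * sum_S y_S; there are m/k groups.  A raised set has 0 < sur(S) < k, hence
   k <= 2 sur(S) (k - sur(S)), which gives the first inequality; the duals stay feasible,
   which gives the second. *)

Section HMetricFacts.
Variables (R : realType) (X : Type) (k gamma : nat) (dH : ('I_k -> X) -> R).
Hypothesis dH_Hmetric : is_Hmetric dH gamma.

Lemma dH_ge0 p : 0 <= dH p.
Proof. by case: dH_Hmetric. Qed.

Lemma dH_perm (s : {perm 'I_k}) p : dH (fun j => p (s j)) = dH p.
Proof. by case: dH_Hmetric => _ []. Qed.

Lemma dH_const p : (forall i j, p i = p j) -> dH p = 0.
Proof. by case: dH_Hmetric => _ [_ [hz _]] /hz. Qed.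

Lemma dH_split p a (i : nat) : (1 <= i <= k)%N ->
  dH p <= dH (fun j : 'I_k => if (j < i)%N then p j else a)
          + dH (fun j : 'I_k => if (j < i)%N then a else p j).
Proof. by case: dH_Hmetric => _ [_ [_ [/(_ p a i) ht _]]]. Qed.

Lemma dist_ge0 p q : 0 <= dist dH p q.
Proof. by rewrite addr_ge0 ?dH_ge0. Qed.

Lemma dist_sym p q : dist dH p q = dist dH q p.
Proof. by rewrite /dist addrC. Qed.

Lemma dist_xx p : dist dH p p = 0.
Proof. by rewrite /dist !dH_const ?addr0 // => i j; case: ifP; case: ifP. Qed.

Hypothesis k_gt0 : (0 < k)%N.

Lemma dist_triangle p q a : dist dH p q <= dist dH p a + dist dH a q.
Proof.
have star x y : dH (fun j : 'I_k => if nat_of_ord j == 0%N then x else y) <=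
    dH (fun j : 'I_k => if nat_of_ord j == 0%N then x else a)
    + dH (fun j : 'I_k => if nat_of_ord j == 0%N then a else y).
  have := dH_split (fun j : 'I_k => if nat_of_ord j == 0%N then x else y) a.
  move=> /(_ 1%N); rewrite k_gt0 => /(_ isT).
  by congr (_ <= dH _ + dH _); apply: functional_extensionality => -[[|j] ?].
have := star p q; have := star q p; rewrite /dist; lra.
Qed.

(* Swap [j] into the first position and split off that entry. *)
Lemma dH_update_le (q : 'I_k -> X) a (j : 'I_k) :
  dH q <= dH (fun i => if i == j then a else q i) + dist dH (q j) a.
Proof.
pose o : 'I_k := Ordinal k_gt0; pose s := tperm o j.
have i0E (i : 'I_k) : (i < 1)%N = (i == o) by rewrite ltnS leqn0.
have := dH_split (fun i => q (s i)) a (i := 1).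
rewrite k_gt0 dH_perm => /(_ isT) /le_trans; apply.
have -> : (fun i : 'I_k => if (i < 1)%N then a else q (s i))
        = (fun i => (fun i => if i == j then a else q i) (s i)).
  apply: functional_extensionality => i; rewrite i0E.
  case: eqP => [->|/eqP io]; first by rewrite tpermL eqxx.
  by rewrite -[j](tpermL o) (inj_eq perm_inj) (negbTE io).
rewrite (dH_perm s (fun i => if i == j then a else q i)) addrC lerD2l.
rewrite /dist ler_wpDr ?dH_ge0 //.
rewrite le_eqVlt; apply/predU1P; left; congr dH; apply: functional_extensionality => i.
case: i => -[|i] ? //=; rewrite (_ : Ordinal _ = o) ?tpermL //; exact: val_inj.
Qed.

Lemma dH_replace_seq_le (q : 'I_k -> X) a (s : seq 'I_k) :
  dH q <= dH (fun i => if i \in s then a else q i) + \sum_(i <- s) dist dH (q i) a.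
Proof.
elim: s => [|j s IH]; first by rewrite big_nil addr0.
apply: le_trans IH _; rewrite big_cons addrA lerD2r.
set q' := fun i => if i \in s then a else q i.
apply: le_trans (dH_update_le q' a j) _; apply: lerD.
  rewrite le_eqVlt; apply/predU1P; left; congr dH.
  by apply: functional_extensionality => i; rewrite in_cons; case: (i == j).
by rewrite /q'; case: ifP => _; rewrite ?dist_xx ?dist_ge0.
Qed.

Lemma dH_le_sum_dist (q : 'I_k -> X) a : dH q <= \sum_i dist dH (q i) a.
Proof.
apply: le_trans (dH_replace_seq_le q a (enum 'I_k)) _.
rewrite dH_const => [|i j]; last by rewrite !mem_enum.
by rewrite add0r big_enum.
Qed.

Lemma group_cost_le_diam (m : nat) (pos : 'I_m -> X) (G : {set 'I_m}) (D : R) :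
  #|G| = k -> (forall u w, u \in G -> w \in G -> dist dH (pos u) (pos w) <= D) ->
  group_cost dH pos G <= k%:R * D.
Proof.
move=> cardG diamG; rewrite /group_cost.
have size_enum : size (enum G) = k by rewrite -cardG cardE.
case E: (enum G) => [|v0 s]; first by move: k_gt0; rewrite -size_enum E.
apply: le_trans (dH_le_sum_dist _ (pos v0)) _.
rewrite -[k in k%:R](card_ord k) -sum1_card natr_sum mulr_suml.
apply: ler_sum => i _; rewrite mul1r diamG //.
  by rewrite -mem_enum -E mem_nth // size_enum.
by rewrite -mem_enum E mem_head.
Qed.

End HMetricFacts.

Section MergeBlocks.
Variables (T : finType) (P : {set {set T}}) (A B : {set T}).
Hypotheses (AP : A \in P) (BP : B \in P).

Let Q := P :\ A :\ B.

Lemma merge_blocksE : P = A |: (B |: Q).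
Proof.
apply/setP => C; rewrite !inE.
have [->|_] := eqVneq C A; first by rewrite AP.
by have [->|_] := eqVneq C B; rewrite ?eqxx ?BP ?orbT.
Qed.

Lemma cover_merge_blocks : cover ((A :|: B) |: Q) = cover P.
Proof. by rewrite [in RHS]merge_blocksE /cover !bigcup_setU !big_set1 setUA. Qed.

Lemma trivIset_merge_blocks : trivIset P -> trivIset ((A :|: B) |: Q).
Proof.
move=> /trivIsetP trivP.
have QP C : C \in Q -> C \in P by rewrite !inE => /and3P [].
have disjU C : C \in Q -> [disjoint A :|: B & C].
  rewrite !inE => /and3P [CB CA CP].
  by rewrite !disjoints_subset subUset -!disjoints_subset !trivP // eq_sym.
apply/trivIsetP => C D /setU1P [->|CQ] /setU1P [->|DQ]; rewrite ?eqxx // => CD.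
- exact: disjU.
- by rewrite disjoint_sym disjU.
- exact: trivP (QP _ CQ) (QP _ DQ) CD.
Qed.

Lemma laminar_merge_blocks (S : {set T}) :
  (forall C, C \in P -> S \subset C \/ [disjoint S & C]) ->
  forall C, C \in (A :|: B) |: Q -> S \subset C \/ [disjoint S & C].
Proof.
move=> lamP C /setU1P [->|CQ]; last by apply: lamP; move: CQ; rewrite !inE => /and3P [].
case: (lamP _ AP) => [SA|dA]; first by left; rewrite subsetU ?SA.
case: (lamP _ BP) => [SB|dB]; first by left; rewrite subsetU ?SB ?orbT.
by right; rewrite !disjoints_subset setCU subsetI -!disjoints_subset dA dB.
Qed.

Lemma set0_notin_merge_blocks : set0 \notin P -> set0 \notin (A :|: B) |: Q.
Proof.
move=> P0; rewrite in_setU1 negb_or; apply/andP; split.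
  apply: contraNneq P0 => AB0; suff <- : A = set0 by [].
  by apply/eqP; rewrite -subset0 AB0 subsetUl.
by apply: contra P0; rewrite !inE => /and3P [].
Qed.

Lemma sub_merge_blocks (g : {set T}) :
  (exists2 C, C \in P & g \subset C) -> exists2 C, C \in (A :|: B) |: Q & g \subset C.
Proof.
case=> C CP gC; have [CA|nCA] := eqVneq C A.
  by exists (A :|: B); rewrite ?setU11 // -CA subsetU ?gC.
have [CB|nCB] := eqVneq C B.
  by exists (A :|: B); rewrite ?setU11 // -CB subsetU ?gC ?orbT.
by exists C; rewrite // !inE nCA nCB CP !orbT.
Qed.

End MergeBlocks.

(* The matched part of a block is a disjoint union of groups of size k. *)
Lemma dvdn_card_matched (T : finType) (P M : {set {set T}}) (S : {set T}) (k : nat) :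
  trivIset P -> trivIset M -> S \in P ->
  (forall g, g \in M -> #|g| = k) ->
  (forall g, g \in M -> exists2 C, C \in P & g \subset C) ->
  (k %| #|S :&: cover M|)%N.
Proof.
move=> trivP trivM SP cardM subM.
pose MS := [set g in M | g \subset S].
have MS_M : MS \subset M by apply/subsetP => g; rewrite inE => /andP [].
suff -> : S :&: cover M = cover MS.
  rewrite -(eqP (trivIsetS MS_M trivM)); apply: dvdn_sum => g.
  by rewrite inE => /andP [/cardM ->].
apply/setP => x; apply/idP/bigcupP.
  rewrite inE => /andP [xS /bigcupP [g gM xg]]; exists g => //; rewrite inE gM.
  have [C CP gC] := subM g gM; case: (eqVneq C S) => [<- //|CS].
  by have := disjointFr ((trivIsetP trivP) _ _ CP SP CS) (subsetP gC _ xg); rewrite xS.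
case=> g; rewrite inE => /andP [gM gS] xg.
by rewrite inE (subsetP gS _ xg); apply/bigcupP; exists g.
Qed.

Definition pair_coef (m : nat) (S : {set 'I_m}) (u w : 'I_m) (S' : {set 'I_m}) : nat :=
  if S' \subset S then (2 - (u \in S') - (w \in S'))%N else 0%N.

Definition pair_bound (R : numDomainType) (m : nat) (y : {set 'I_m} -> R)
    (u w : 'I_m) (S : {set 'I_m}) : R :=
  \sum_(S' : {set 'I_m}) (pair_coef S u w S')%:R * y S'.

Section PairBound.
Variables (R : numDomainType) (m : nat) (y : {set 'I_m} -> R).
Hypothesis y_ge0 : forall S, 0 <= y S.

Lemma pair_bound_sym u w S : pair_bound y u w S = pair_bound y w u S.
Proof.
apply: eq_bigr => S' _; rewrite /pair_coef; case: ifP => // _.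
by case: (u \in S'); case: (w \in S').
Qed.

Lemma pair_bound_ge0 u w S : 0 <= pair_bound y u w S.
Proof. by apply: sumr_ge0 => S' _; rewrite mulr_ge0. Qed.

Lemma pair_bound_subset u w (S1 S2 : {set 'I_m}) :
  S1 \subset S2 -> pair_bound y u w S1 <= pair_bound y u w S2.
Proof.
move=> S12; apply: ler_sum => S' _; rewrite ler_wpM2r // ler_nat /pair_coef.
by case: ifP => // S'1; rewrite (subset_trans S'1 S12).
Qed.

Lemma pair_bound_le_sum u w S : pair_bound y u w S <= 2 * \sum_S' y S'.
Proof.
rewrite mulr_sumr; apply: ler_sum => S' _; rewrite ler_wpM2r //.
by rewrite -[2]/(2%:R) ler_nat /pair_coef; case: ifP => // _; lia.
Qed.

Lemma ler_pair_bound (y' : {set 'I_m} -> R) u w S :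
  (forall S, y S <= y' S) -> pair_bound y u w S <= pair_bound y' u w S.
Proof. by move=> yy'; apply: ler_sum => S' _; rewrite ler_wpM2l. Qed.

End PairBound.

Lemma rate_gt0 (R : realType) (k gamma : nat) :
  (0 < k)%N -> (0 < gamma)%N -> 0 < rate R k gamma.
Proof. by move=> k0 g0; rewrite invr_gt0 mulr_gt0 ?exprn_gt0 ?ltr0n. Qed.

Lemma ysum_sym (R : realType) (m : nat) (y : {set 'I_m} -> R) u w :
  ysum y u w = ysum y w u.
Proof. by apply: eq_bigl => S; rewrite /in_delta eq_sym. Qed.

Lemma ysumE (R : realType) (m : nat) (y : {set 'I_m} -> R) u w :
  ysum y u w = \sum_(S : {set 'I_m}) (in_delta S u w)%:R * y S.
Proof.
by rewrite /ysum big_mkcond; apply: eq_bigr => S _; case: in_delta; rewrite ?mul1r ?mul0r.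
Qed.

Lemma opt_cost_sym (R : realType) (X : Type) (k : nat) (dH : ('I_k -> X) -> R)
    (m : nat) (atime : 'I_m -> R) (pos : 'I_m -> X) u w :
  opt_cost dH atime pos u w = opt_cost dH atime pos w u.
Proof. by rewrite /opt_cost dist_sym distrC. Qed.

(* [sa], [sb], [sn]: whether S' lies in the block of u, of w, or in their union;
   [xa], [xu], [xw], [xb]: whether a, u, w, b lie in S'. *)
Lemma merge_coef_le (sa sb sn xa xu xw xb : bool) :
  ~~ (sa && sb) -> (sa ==> sn) -> (sb ==> sn) ->
  (sa ==> ~~ xw && ~~ xb) -> (sb ==> ~~ xa && ~~ xu) ->
  (sa || ~~ xa && ~~ xu) -> (sb || ~~ xw && ~~ xb) ->
  ((if sa then 2 - xa - xu else 0) + (xu != xw) + (if sb then 2 - xw - xb else 0)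
    <= (if sn then 2 - xa - xb else 0))%N.
Proof. by case: sa; case: sb; case: sn; case: xa; case: xu; case: xw; case: xb. Qed.

Section GDInvariant.
Variables (R : realType) (X : Type) (k gamma : nat) (dH : ('I_k -> X) -> R).
Variables (m : nat) (atime : 'I_m -> R) (pos : 'I_m -> X).
Hypotheses (k_ge2 : (2 <= k)%N) (gamma_gt0 : (0 < gamma)%N).
Hypothesis dH_Hmetric : is_Hmetric dH gamma.

Local Notation r := (rate R k gamma).
Local Notation opt_cost := (opt_cost dH atime pos).

Record gd_inv (s : state R m) : Prop := {
  act_trivI : trivIset (st_act s);
  act_nonempty : set0 \notin st_act s;
  cover_act : cover (st_act s) = st_arr s;
  match_trivI : trivIset (st_match s);
  card_match : forall g, g \in st_match s -> #|g| = k;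
  match_sub_act : forall g, g \in st_match s -> exists2 S, S \in st_act s & g \subset S;
  card_free_act : forall S, S \in st_act s -> (#|Defs.free s S| < k)%N;
  y_ge0 : forall S, 0 <= st_y s S;
  y_support : forall S, st_y s S != 0 -> [/\ S != set0, S \subset st_arr s &
    forall B, B \in st_act s -> S \subset B \/ [disjoint S & B]];
  y_sur_gt0 : forall S, st_y s S != 0 -> (0 < sur k S)%N;
  y_arrival_bound : forall u, u \in st_arr s ->
    \sum_(S : {set 'I_m} | u \in S) st_y s S <= r * (st_time s - atime u);
  future_arrivals : forall v, v \notin st_arr s -> st_time s <= atime v;
  feasible_arrived : forall u w, u \in st_arr s -> w \in st_arr s -> u != w ->
    ysum (st_y s) u w <= r * opt_cost u w;
  dist_le_pair_bound : forall S, S \in st_act s -> forall u w, u \in S -> w \in S ->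
    dist dH (pos u) (pos w) <= r^-1 * pair_bound (st_y s) u w S
}.

Let r_gt0 : 0 < r. Proof. by apply: rate_gt0 => //; lia. Qed.

Lemma gd_inv_init : (forall v, 0 <= atime v) -> gd_inv (init_state R m).
Proof.
move=> atime_ge0; split=> //=; rewrite ?in_set0 //.
- by apply/trivIsetP => A B; rewrite in_set0.
- by rewrite /cover big_set0.
- by apply/trivIsetP => A B; rewrite in_set0.
all: try by move=> ?; rewrite in_set0.
all: try by move=> ? ?; rewrite in_set0.
all: by move=> ?; rewrite eqxx.
Qed.

Section Step.
Variable s : state R m.
Hypothesis I : gd_inv s.

Lemma blkP u : u \in st_arr s ->
  [/\ u \in blk s u, blk s u \in st_act s &
      forall S, S \in st_act s -> u \in S -> S = blk s u].
Proof.
rewrite -(cover_act I) => u_cov; split; first by rewrite mem_pblock.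
  exact: pblock_mem.
by move=> S SA uS; rewrite /blk (def_pblock (act_trivI I) SA uS).
Qed.

(* Duals containing [u] only grew since [u] arrived, while [w] has not arrived yet. *)
Lemma ysum_le_arrival u w : u \in st_arr s -> w \notin st_arr s ->
  ysum (st_y s) u w <= r * opt_cost u w.
Proof.
move=> ua wa; apply: (@le_trans _ _ (\sum_(S : {set 'I_m} | u \in S) st_y s S)).
  rewrite /ysum big_mkcond [X in _ <= X]big_mkcond /=; apply: ler_sum => S _.
  have [->|yS] := eqVneq (st_y s S) 0; first by case: ifP; case: ifP.
  have [_ Sa _] := y_support I yS.
  have wS : w \notin S by apply: contra wa => /(subsetP Sa).
  by rewrite /in_delta (negbTE wS); case: (u \in S); rewrite ?y_ge0.
apply: le_trans (y_arrival_bound I ua) _; apply: ler_wpM2l; first exact: ltW.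
rewrite /opt_cost distrC.
have := future_arrivals I wa; have := dist_ge0 dH_Hmetric (pos u) (pos w).
have := ler_norm (atime w - atime u); lra.
Qed.

Lemma gd_inv_arrive v : v \notin st_arr s -> atime v = st_time s ->
  gd_inv (State (st_time s) (v |: st_arr s) ([set v] |: st_act s) (st_match s) (st_y s)).
Proof.
move=> va vt.
have dis B : B \in st_act s -> [disjoint [set v] & B].
  move=> BA; rewrite disjoints1; apply: contra va => vB.
  by rewrite -(cover_act I); apply/bigcupP; exists B.
have [trivA' _] := trivIsetU1 dis (act_trivI I) (act_nonempty I).
split=> //=.
- rewrite !inE negb_or (act_nonempty I) andbT eq_sym.
  by apply/set0Pn; exists v; rewrite set11.
- by rewrite /cover bigcup_setU big_set1 -(cover_act I).
- exact: match_trivI I.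
- exact: card_match I.
- by move=> g /(match_sub_act I) [S SA gS]; exists S; rewrite // !inE SA orbT.
- move=> S /setU1P [->|/(card_free_act I) //].
  by apply: leq_ltn_trans (subset_leq_card (subsetDl _ _)) _; rewrite cards1; lia.
- exact: y_ge0 I.
- move=> S yS; have [S0 Sa lam] := y_support I yS; split=> //.
    by rewrite subsetU ?Sa ?orbT.
  move=> B /setU1P [->|/lam //]; right; rewrite disjoint_sym disjoints1.
  by apply: contra va => /(subsetP Sa).
- exact: y_sur_gt0 I.
- move=> u /setU1P [->|/(y_arrival_bound I) //]; rewrite vt subrr mulr0 big1 // => S vS.
  apply/eqP; apply: contraT => yS; have [_ Sa _] := y_support I yS.
  by case/negP: va; apply: (subsetP Sa).
- by move=> u; rewrite !inE negb_or => /andP [_ /(future_arrivals I)].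
- move=> u w /setU1P [->|ua] /setU1P [->|wa]; rewrite ?eqxx // => uw.
  + by rewrite ysum_sym opt_cost_sym ysum_le_arrival.
  + exact: ysum_le_arrival.
  + exact: feasible_arrived.
- move=> S /setU1P [-> u w /set1P -> /set1P ->|/(dist_le_pair_bound I) //].
  rewrite (dist_xx dH_Hmetric); apply: mulr_ge0; first by rewrite invr_ge0 ltW.
  exact: pair_bound_ge0 (y_ge0 I) _ _ _.
Qed.

Lemma sur_gt0_free S : S \in st_act s -> Defs.free s S != set0 -> (0 < sur k S)%N.
Proof.
move=> SA; rewrite -card_gt0 => free_gt0.
have := dvdn_card_matched (act_trivI I) (match_trivI I) SA (card_match I) (match_sub_act I).
have := card_free_act I SA.
rewrite /sur -(cardsID (cover (st_match s)) S) => free_lt /dvdnP [q ->].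
by rewrite modnMDl modn_small.
Qed.

Section Wait.
Variable dt : R.
Hypothesis dt_gt0 : 0 < dt.

Local Notation y' := (grow k gamma s dt).

Lemma grow_ge S : st_y s S <= y' S.
Proof. by rewrite /grow lerDl; case: ifP => // _; rewrite mulr_ge0 ?ltW. Qed.

Lemma grow_support S : y' S != 0 ->
  st_y s S != 0 \/ S \in st_act s /\ Defs.free s S != set0.
Proof.
rewrite /grow; have [->|yS] := eqVneq (st_y s S) 0; last by left.
by rewrite add0r; case: ifP => [/andP [SA fr] _|_]; [right | rewrite eqxx].
Qed.

(* Only the block of [u] grows among the sets containing [u]. *)
Lemma y_arrival_bound_grow u : u \in st_arr s ->
  \sum_(S : {set 'I_m} | u \in S) y' S <= r * (st_time s + dt - atime u).
Proof.
move=> ua; have [ub bA blk_uniq] := blkP ua.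
rewrite /grow big_split /= [X in _ + X](bigD1 (blk s u)) //=.
rewrite [X in _ + (_ + X)]big1 ?addr0; last first.
  move=> S /andP [uS nS]; case: ifP => // /andP [SA _].
  by move: nS; rewrite (blk_uniq S SA uS) eqxx.
rewrite addrAC mulrDr; apply: lerD; first by have := y_arrival_bound I ua.
by case: ifP => // _; rewrite mulr_ge0 ?ltW.
Qed.

Lemma ysum_grow_same_blk u w : u \in st_arr s -> w \in st_arr s ->
  blk s u = blk s w -> ysum y' u w = ysum (st_y s) u w.
Proof.
move=> ua wa uw; have [ub bA ubl] := blkP ua; have [wb bwA wbl] := blkP wa.
apply: eq_bigr => S sep; rewrite /grow; case: ifP => [/andP [SA _]|_]; last by rewrite addr0.
exfalso; move: sep; rewrite /in_delta.
have [uS|uS] := boolP (u \in S); first by rewrite (ubl _ SA uS) uw wb.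
by have [wS|//] := boolP (w \in S); move: uS; rewrite (wbl _ SA wS) -uw ub.
Qed.

Lemma gd_inv_wait :
  (forall v, v \notin st_arr s -> st_time s + dt <= atime v) ->
  (forall u w, u \in st_arr s -> w \in st_arr s -> blk s u != blk s w ->
     ysum y' u w <= r * opt_cost u w) ->
  gd_inv (State (st_time s + dt) (st_arr s) (st_act s) (st_match s) y').
Proof.
move=> fut no_overtight; split=> //=.
- exact: act_trivI I.
- exact: act_nonempty I.
- exact: cover_act I.
- exact: match_trivI I.
- exact: card_match I.
- exact: match_sub_act I.
- exact: card_free_act I.
- by move=> S; apply: le_trans (y_ge0 I S) (grow_ge S).
- move=> S /grow_support [/(y_support I) //|[SA _]]; split.
  + by apply: contraNneq (act_nonempty I) => <-.
  + by rewrite -(cover_act I) bigcup_sup.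
  + move=> B BA; have [->|SB] := eqVneq S B; first by left.
    by right; apply: (trivIsetP (act_trivI I)) SB.
- by move=> S /grow_support [/(y_sur_gt0 I) //|[SA fr]]; apply: sur_gt0_free.
- exact: y_arrival_bound_grow.
- move=> u w ua wa uw; have [e|ne] := eqVneq (blk s u) (blk s w); last exact: no_overtight.
  by rewrite ysum_grow_same_blk //; apply: feasible_arrived.
- move=> S SA u w uS wS; apply: le_trans (dist_le_pair_bound I SA uS wS) _.
  apply: ler_wpM2l; first by rewrite invr_ge0 ltW.
  exact: ler_pair_bound grow_ge.
Qed.

End Wait.

Section Merge.
Variables (u w : 'I_m) (G : {set {set 'I_m}}).
Hypotheses (ua : u \in st_arr s) (wa : w \in st_arr s) (uw_blk : blk s u != blk s w).
Hypothesis tight : ysum (st_y s) u w = r * opt_cost u w.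

Local Notation Bu := (blk s u).
Local Notation Bw := (blk s w).

(* Coefficient-wise, the triangle inequality through the tight pair {u, w}. *)
Lemma dist_le_pair_bound_cross a b : a \in Bu -> b \in Bw ->
  dist dH (pos a) (pos b) <= r^-1 * pair_bound (st_y s) a b (Bu :|: Bw).
Proof.
move=> aB bB; have [uB BuA _] := blkP ua; have [wB BwA _] := blkP wa.
have BuBw := (trivIsetP (act_trivI I)) _ _ BuA BwA uw_blk.
have d_uw : dist dH (pos u) (pos w) <= r^-1 * ysum (st_y s) u w.
  by rewrite tight mulKf ?gt_eqF // /opt_cost lerDl normr_ge0.
have tri := dist_triangle dH_Hmetric (ltnW k_ge2).
apply: le_trans (tri _ _ (pos u)) _; apply: le_trans (lerD (lexx _) (tri _ _ (pos w))) _.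
apply: le_trans (lerD (dist_le_pair_bound I BuA aB uB)
                  (lerD d_uw (dist_le_pair_bound I BwA wB bB))) _.
rewrite -!mulrDr; apply: ler_wpM2l; first by rewrite invr_ge0 ltW.
rewrite ysumE /pair_bound -!big_split /=; apply: ler_sum => S _.
have [->|yS] := eqVneq (st_y s S) 0; first by rewrite !mulr0 !addr0.
rewrite -!mulrDl ler_wpM2r ?y_ge0 // -!natrD ler_nat /pair_coef /in_delta.
have [S0 _ lam] := y_support I yS.
rewrite addnA; apply: merge_coef_le.
- apply/negP => /andP [SBu SBw]; case/set0Pn: S0 => x xS.
  by have := subsetP SBw _ xS; rewrite (disjointFr BuBw (subsetP SBu _ xS)).
- by apply/implyP => SBu; rewrite subsetU ?SBu.
- by apply/implyP => SBw; rewrite subsetU ?SBw ?orbT.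
- apply/implyP => SBu; have dS := disjointWl SBu BuBw.
  by rewrite (disjointFl dS wB) (disjointFl dS bB).
- apply/implyP => SBw; have dS := disjointWr SBw BuBw.
  by rewrite (disjointFr dS aB) (disjointFr dS uB).
- by case: (lam _ BuA) => [->//|dS]; rewrite (disjointFl dS aB) (disjointFl dS uB) orbT.
- by case: (lam _ BwA) => [->//|dS]; rewrite (disjointFl dS wB) (disjointFl dS bB) orbT.
Qed.

Lemma dist_le_pair_bound_merged a b : a \in Bu :|: Bw -> b \in Bu :|: Bw ->
  dist dH (pos a) (pos b) <= r^-1 * pair_bound (st_y s) a b (Bu :|: Bw).
Proof.
have [_ BuA _] := blkP ua; have [_ BwA _] := blkP wa.
have inside B : B \in st_act s -> B \subset Bu :|: Bw -> a \in B -> b \in B ->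
    dist dH (pos a) (pos b) <= r^-1 * pair_bound (st_y s) a b (Bu :|: Bw).
  move=> BA BN aB bB; apply: le_trans (dist_le_pair_bound I BA aB bB) _.
  apply: ler_wpM2l; first by rewrite invr_ge0 ltW.
  exact: pair_bound_subset (y_ge0 I) _ _ _ _ BN.
rewrite !inE => /orP [] aB /orP [] bB.
- exact: inside BuA (subsetUl _ _) aB bB.
- exact: dist_le_pair_bound_cross.
- by rewrite dist_sym pair_bound_sym; apply: dist_le_pair_bound_cross.
- exact: inside BwA (subsetUr _ _) aB bB.
Qed.

Lemma gd_inv_merge :
  (forall g, g \in G -> g \subset Defs.free s (Bu :|: Bw) /\ #|g| = k) -> trivIset G ->
  (#|Defs.free s (Bu :|: Bw) :\: cover G| < k)%N ->
  gd_inv (State (st_time s) (st_arr s) ((Bu :|: Bw) |: ((st_act s :\ Bu) :\ Bw))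
                (st_match s :|: G) (st_y s)).
Proof.
move=> groupsG trivG free_lt.
have [uB BuA _] := blkP ua; have [wB BwA _] := blkP wa.
have QA S : S \in (st_act s :\ Bu) :\ Bw -> S \in st_act s by rewrite !inE => /and3P [].
have coverG : cover G \subset Defs.free s (Bu :|: Bw) by apply/bigcupsP => g /groupsG [].
have coverMG : cover (st_match s :|: G) = cover (st_match s) :|: cover G.
  by rewrite /cover bigcup_setU.
split=> //=.
- exact: trivIset_merge_blocks BuA BwA (act_trivI I).
- exact: set0_notin_merge_blocks Bw BuA (act_nonempty I).
- by rewrite cover_merge_blocks // (cover_act I).
- apply: trivIsetU (match_trivI I) trivG _.
  rewrite disjoint_sym disjoints_subset; apply: subset_trans coverG _.
  by rewrite /Defs.free setDE subsetIr.
- by move=> g /setUP [/(card_match I) | /groupsG []].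
- move=> g /setUP [/(match_sub_act I) /(sub_merge_blocks Bu Bw) // | gG].
  have [gF _] := groupsG g gG; exists (Bu :|: Bw); first exact: setU11.
  exact: subset_trans gF (subsetDl _ _).
- move=> S /setU1P [->|/QA SA]; first by rewrite /Defs.free /= coverMG -setDDl.
  apply: leq_ltn_trans (card_free_act I SA); apply: subset_leq_card.
  by rewrite /Defs.free /= coverMG setDS ?subsetUl.
- exact: y_ge0 I.
- move=> S yS; have [S0 Sa lam] := y_support I yS; split=> //.
  exact: laminar_merge_blocks.
- exact: y_sur_gt0 I.
- by have := y_arrival_bound I.
- exact: future_arrivals I.
- exact: feasible_arrived I.
- move=> S /setU1P [->|/QA SA]; first exact: dist_le_pair_bound_merged.
  by have := dist_le_pair_bound I SA.
Qed.

End Merge.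

End Step.

Lemma gd_inv_reaches s1 s2 :
  reaches gamma dH atime pos s1 s2 -> gd_inv s1 -> gd_inv s2.
Proof.
elim=> // s s' s'' st _ IH I; apply: IH; case: st I => {s s' s''}.
- by move=> s v va vt I; apply: gd_inv_arrive.
- by move=> s dt dt_gt0 fut _ no_overtight I; apply: gd_inv_wait.
- by move=> s u w G ua wa uw tight groupsG trivG free_lt I; apply: gd_inv_merge.
Qed.

Section Final.
Variable s : state R m.
Hypotheses (I : gd_inv s) (all_matched : cover (st_match s) = [set: 'I_m]).

Lemma card_match_mul : (#|st_match s| * k = m)%N.
Proof.
rewrite -sum_nat_const -[in RHS](card_ord m) -cardsT -all_matched -(eqP (match_trivI I)).
by apply: eq_bigr => g /(card_match I).
Qed.

Lemma all_arrived u : u \in st_arr s.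
Proof.
have : u \in cover (st_match s) by rewrite all_matched inE.
case/bigcupP => g /(match_sub_act I) [S SA gS] ug.
by rewrite -(cover_act I); apply/bigcupP; exists S => //; apply: (subsetP gS).
Qed.

Lemma sum_group_cost_le :
  \sum_(g in st_match s) group_cost dH pos g
    <= 2 * gamma%:R * m%:R * k%:R * (k%:R * \sum_S st_y s S).
Proof.
have cost_le g : g \in st_match s ->
    group_cost dH pos g <= k%:R * (r^-1 * (2 * \sum_S st_y s S)).
  move=> gM; apply: (group_cost_le_diam dH_Hmetric (ltnW k_ge2) (card_match I gM)).
  move=> a b ag bg; have [S SA gS] := match_sub_act I gM.
  apply: le_trans (dist_le_pair_bound I SA (subsetP gS _ ag) (subsetP gS _ bg)) _.
  apply: ler_wpM2l; first by rewrite invr_ge0 ltW.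
  exact: pair_bound_le_sum (y_ge0 I) _ _ _.
have mE : m%:R = #|st_match s|%:R * k%:R :> R by rewrite -natrM card_match_mul.
apply: le_trans (ler_sum _ cost_le) _.
rewrite sumr_const -[X in X <= _]mulr_natl mE /rate invrK le_eqVlt; apply/predU1P; left; ring.
Qed.

End Final.

End GDInvariant.

Lemma sum_y_le_dual_obj (R : realType) (m k : nat) (y : {set 'I_m} -> R) :
  (forall S, 0 <= y S) -> (forall S, y S != 0 -> (0 < sur k S)%N) ->
  k%:R * \sum_S y S <= 2 * dual_obj k y.
Proof.
move=> y_ge0 y_sur; rewrite /dual_obj !mulr_sumr; apply: ler_sum => S _.
have [->|yS] := eqVneq (y S) 0; first by rewrite !mulr0.
rewrite !mulrA -!natrM ler_wpM2r // ler_nat.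
have := y_sur S yS; have : (0 < k)%N -> (sur k S < k)%N by rewrite /sur ltn_mod.
nia.
Qed.

Section DualOptimum.
Variables (R : realType) (X : Type) (k gamma : nat) (dH : ('I_k -> X) -> R).
Variables (m : nat) (atime : 'I_m -> R) (pos : 'I_m -> X).
Hypotheses (dH_Hmetric : is_Hmetric dH gamma) (k_gt0 : (0 < k)%N) (k_dvd_m : (k %| m)%N).

Local Notation opt_cost := (opt_cost dH atime pos).
Local Notation total_cost := (\sum_(u : 'I_m) \sum_(w : 'I_m) opt_cost u w).

Lemma opt_cost_ge0 u w : 0 <= opt_cost u w.
Proof. by rewrite addr_ge0 ?(dist_ge0 dH_Hmetric). Qed.

(* A set with nonzero surplus separates some pair, whose constraint bounds [y S]. *)
Lemma dual_feasible_le_total_cost y S : dual_feasible gamma dH atime pos y ->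
  (0 < sur k S)%N -> y S <= rate R k gamma * total_cost.
Proof.
move=> [y_ge0 y_feas] sur_gt0.
have [u uS] : exists u, u \in S.
  by apply/set0Pn; apply: contraTneq sur_gt0 => ->; rewrite /sur cards0 mod0n.
have [w wS] : exists w, w \notin S.
  apply/existsP; rewrite -negb_forall; apply: contraTN sur_gt0 => /forallP S_full.
  have -> : S = [set: 'I_m] by apply/setP => v; rewrite inE S_full.
  by rewrite /sur cardsT card_ord; move: k_dvd_m; rewrite /dvdn => /eqP ->.
have uw : u != w by apply: contraNneq wS => <-.
apply: le_trans (_ : y S <= ysum y u w) _.
  rewrite /ysum (bigD1 S) /=; last by rewrite /in_delta uS (negbTE wS).
  by rewrite lerDl sumr_ge0.
apply: le_trans (y_feas _ _ uw) _; apply: ler_wpM2l.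
  by rewrite invr_ge0 mulr_ge0 ?exprn_ge0.
rewrite (bigD1 u) //= (bigD1 w) //= -addrA lerDl addr_ge0 ?sumr_ge0 // => v _.
  exact: opt_cost_ge0.
by rewrite sumr_ge0 // => v' _; apply: opt_cost_ge0.
Qed.

Lemma dual_obj_le_dual_opt y :
  dual_feasible gamma dH atime pos y -> dual_obj k y <= dual_opt gamma dH atime pos.
Proof.
move=> y_feas; pose B := rate R k gamma * total_cost.
have B_ge0 : 0 <= B.
  rewrite mulr_ge0 ?invr_ge0 ?mulr_ge0 ?exprn_ge0 ?sumr_ge0 // => u _.
  by rewrite sumr_ge0 // => w _; apply: opt_cost_ge0.
have obj_le y' : dual_feasible gamma dH atime pos y' ->
    dual_obj k y' <= \sum_(S : {set 'I_m}) (k * k)%:R * B.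
  move=> y'_feas; apply: ler_sum => S _.
  have [sur0|sur_gt0] := posnP (sur k S); first by rewrite sur0 !mul0r mulr_ge0.
  rewrite -natrM; apply: ler_pM; rewrite ?mulr_ge0 ?ler_nat ?leq_mul ?leq_subr //.
  - by case: y'_feas.
  - by rewrite /sur ltnW // ltn_mod.
  - exact: dual_feasible_le_total_cost.
apply: sup_upper_bound; last by exists y.
split; first by exists (dual_obj k y), y.
by exists (\sum_(S : {set 'I_m}) (k * k)%:R * B) => _ [y' y'_feas <-]; apply: obj_le.
Qed.

End DualOptimum.

Theorem lemma7 (R : realType) (X : Type) (k gamma : nat)
    (dH : ('I_k -> X) -> R) (m : nat) (atime : 'I_m -> R) (pos : 'I_m -> X)
    (sf : state R m) :
  (2 <= k)%N -> (1 <= gamma <= k.-1)%N -> is_Hmetric dH gamma ->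
  (k %| m)%N ->
  (forall v, 0 <= atime v) ->
  (forall u v : 'I_m, (u <= v)%N -> atime u <= atime v) ->
  reaches gamma dH atime pos (init_state R m) sf ->
  cover (st_match sf) = [set: 'I_m] ->
  \sum_(G in st_match sf) group_cost dH pos G
    <= 4%:R * gamma%:R * m%:R * k%:R * dual_obj k (st_y sf)
  /\ 4%:R * gamma%:R * m%:R * k%:R * dual_obj k (st_y sf)
    <= 4%:R * gamma%:R * m%:R * k%:R * dual_opt gamma dH atime pos.
Proof.
move=> k_ge2 /andP [gamma_gt0 _] dH_Hmetric k_dvd_m atime_ge0 _ run all_matched.
have I := gd_inv_reaches k_ge2 gamma_gt0 dH_Hmetric run (gd_inv_init gamma dH pos atime_ge0).
split.
  apply: le_trans (sum_group_cost_le k_ge2 gamma_gt0 dH_Hmetric I all_matched) _.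
  have c_ge0 : 0 <= 2 * gamma%:R * m%:R * k%:R :> R by rewrite !mulr_ge0.
  apply: le_trans (ler_wpM2l c_ge0 (sum_y_le_dual_obj (y_ge0 I) (y_sur_gt0 I))) _.
  by rewrite le_eqVlt; apply/predU1P; left; ring.
apply: ler_wpM2l; first by rewrite !mulr_ge0.
apply: dual_obj_le_dual_opt => //; first lia.
split=> [|u w uw]; first exact: y_ge0 I.
by apply: (feasible_arrived I) uw; apply: (all_arrived I all_matched).
Qed.
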